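(* Let $G$ be any group and $f:G\to\mathbb R_{\ge0}$ a subadditive function ($f(xy)\le f(x)+f(y)$ for all $x,y$) with $f(x)=0$ iff $x=\mathrm{id}$, and suppose $f(h^{-1}gh)=f(g)$ for all $g,h\in G$. Then for any $x\le_f z$ in $G$, the map $y\mapsto xy^{-1}z$ maps the interval $[x,z]_f=\{y: x\le_f y\le_f z\}$ to itself and is a poset antiautomorphism of $[x,z]_f$.
   Context: For such $f$, $x\le_f y$ means $f(x)+f(x^{-1}y)=f(y)$; this is a partial order on $G$. *)

From HB Require Import structures.
From mathcomp Require Import all_boot all_order all_algebra.
From mathcomp Require Import reals.
Set Implicit Arguments. Unset Strict Implicit. Unset Printing Implicit Defensive.
Import Order.TTheory GRing.Theory Num.Theory.

Definition le_f (R : realType) (G : groupType) (f : G -> R) (x y : G) : Prop :=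
  (f x + f (x^-1 * y)%g = f y)%R.

Definition f_interval (R : realType) (G : groupType) (f : G -> R) (x z : G) : G -> Prop :=
  fun y => le_f f x y /\ le_f f y z.

Definition antiautomorphism_on (T : Type) (le : T -> T -> Prop) (S : T -> Prop)
    (phi : T -> T) : Prop :=
  [/\ (forall y, S y -> S (phi y)),
      (forall y1 y2, S y1 -> S y2 -> phi y1 = phi y2 -> y1 = y2),
      (forall w, S w -> exists2 y, S y & phi y = w) &
      (forall y1 y2, S y1 -> S y2 -> (le y1 y2 <-> le (phi y2) (phi y1)))].

From HB Require Import structures.
From mathcomp Require Import all_boot all_order all_algebra.
From mathcomp Require Import reals.
From mathcomp Require Import lra.
Set Implicit Arguments. Unset Strict Implicit. Unset Printing Implicit Defensive.
Import Order.TTheory GRing.Theory Num.Theory.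
Local Open Scope ring_scope.

(* Write d(a, b) := f(a^-1 b).  Subadditivity gives f y <= f x + d(x, y), so
   for x <=_f z the interval [x, z]_f is exactly the set of y with
   d(x, y) + d(y, z) = d(x, z).  Conjugation invariance makes every map
   y |-> u y^-1 v reverse d, i.e. d(u b^-1 v, u a^-1 v) = d(a, b), so such a
   map sends d-betweenness to d-betweenness with the endpoints swapped; for
   u = x, v = z it therefore maps [x, z]_f into itself, with inverse
   y |-> z y^-1 x of the same shape.  On the interval f(x y^-1 z) = f x + f z - f y,
   which turns order reversal into a linear identity. *)

Definition fdist (R : Type) (G : groupType) (f : G -> R) (a b : G) : R :=
  f (a^-1 * b)%g.

Definition between (R : nmodType) (G : groupType) (f : G -> R) (a y b : G) :=
  fdist f a y + fdist f y b = fdist f a b.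

Definition mirror (G : groupType) (u v y : G) : G := (u * y^-1 * v)%g.

Lemma mirror_first (G : groupType) (u v : G) : mirror u v u = v.
Proof. by rewrite /mirror mulgV mul1g. Qed.

Lemma mirror_last (G : groupType) (u v : G) : mirror u v v = u.
Proof. by rewrite /mirror mulgVK. Qed.

Lemma mirrorK (G : groupType) (u v : G) : cancel (mirror v u) (mirror u v).
Proof. by move=> w; rewrite /mirror !invgM invgK !mulgA mulgV mul1g mulgVK. Qed.

Lemma mirror_inj (G : groupType) (u v : G) : injective (mirror u v).
Proof. exact: can_inj (mirrorK v u). Qed.

Section ConjugationInvariant.
Variables (R : nmodType) (G : groupType) (f : G -> R).
Hypothesis f_conj : forall g h, f (h^-1 * g * h)%g = f g.

Lemma fdist_mirror (u v a b : G) :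
  fdist f (mirror u v b) (mirror u v a) = fdist f a b.
Proof.
(* (u b^-1 v)^-1 (u a^-1 v) is conjugate to b a^-1, itself conjugate to a^-1 b. *)
rewrite /fdist /mirror !invgM invgK !mulgA mulgVK -[(v^-1 * b / a)%g]mulgA f_conj.
by rewrite -(f_conj _ a) !mulgA mulgVK.
Qed.

Lemma between_mirror (u v a y b : G) :
  between f a y b -> between f (mirror u v b) (mirror u v y) (mirror u v a).
Proof. by rewrite /between !fdist_mirror addrC. Qed.

End ConjugationInvariant.

Lemma f_le_add_fdist (R : numDomainType) (G : groupType) (f : G -> R) :
  (forall x y, f (x * y)%g <= f x + f y) -> forall x y, f y <= f x + fdist f x y.
Proof. by move=> f_subadd x y; rewrite /fdist -{1}(mulVKg x y); apply: f_subadd. Qed.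

Section SubadditiveConjugationInvariant.
Variables (R : realType) (G : groupType) (f : G -> R).
Hypothesis f_subadd : forall x y, f (x * y)%g <= f x + f y.
Hypothesis f_conj : forall g h, f (h^-1 * g * h)%g = f g.

Variables (x z : G).
Hypothesis x_le_z : le_f f x z.

Lemma f_interval_between y : f_interval f x z y <-> between f x y z.
Proof.
move: x_le_z; rewrite /f_interval /le_f /between => hxz.
have := f_le_add_fdist f_subadd x y; have := f_le_add_fdist f_subadd y z; rewrite /fdist => yz xy.
by split=> [[hxy hyz] | hxyz]; [lra | split; lra].
Qed.

Lemma f_interval_mirror u v y :
  mirror u v z = x -> mirror u v x = z ->
  f_interval f x z y -> f_interval f x z (mirror u v y).
Proof.
move=> mz mx /f_interval_between /(between_mirror f_conj u v).
by rewrite mz mx => /f_interval_between.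
Qed.

Lemma f_mirror y :
  f_interval f x z y -> f (mirror x z y) = f x + f z - f y.
Proof.
move=> Sy; have [_ hyz] := Sy.
have [hxm _] := f_interval_mirror (mirror_last x z) (mirror_first x z) Sy.
move: hxm hyz; rewrite /le_f -!/(fdist f _ _).
have -> : fdist f x (mirror x z y) = fdist f y z.
  by rewrite -{1}(mirror_last x z) (fdist_mirror f_conj).
lra.
Qed.

Lemma le_f_mirror y1 y2 :
  f_interval f x z y1 -> f_interval f x z y2 ->
  le_f f y1 y2 <-> le_f f (mirror x z y2) (mirror x z y1).
Proof.
move=> S1 S2; rewrite /le_f -!/(fdist f _ _) (fdist_mirror f_conj) !f_mirror //.
by split; lra.
Qed.

End SubadditiveConjugationInvariant.

Theorem mainTheorem3 (R : realType) (G : groupType) (f : G -> R)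
  (f_ge0 : forall x, 0 <= f x)
  (f_subadd : forall x y, f (x * y)%g <= f x + f y)
  (f_eq0 : forall x, f x = 0 <-> x = 1%g)
  (f_conj : forall g h, f (h^-1 * g * h)%g = f g) :
  forall x z : G, le_f f x z ->
    antiautomorphism_on (le_f f) (f_interval f x z) (fun y => (x * y^-1 * z)%g).
Proof.
move=> x z x_le_z.
have mirror_in := f_interval_mirror f_subadd f_conj x_le_z.
change (antiautomorphism_on (le_f f) (f_interval f x z) (mirror x z)); split.
- by move=> y; apply: mirror_in; [apply: mirror_last | apply: mirror_first].
- by move=> y1 y2 _ _; apply: mirror_inj.
- move=> w Sw; exists (mirror z x w); last exact: mirrorK.
  by apply: mirror_in Sw; [apply: mirror_first | apply: mirror_last].
- by move=> y1 y2; apply: le_f_mirror.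
Qed.
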